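(* Let $A \in \mathbb{R}^{m \times n}$ and $b \in \mathbb{R}^m$ be such that $\mathcal{P} = \{x \in \mathbb{R}^n : Ax \geq b\}$ is a polytope. Then the vertex-edge graph $G_\mathrm{vert}$ of $\mathcal{P}$ is the image of the lex-graph $G_\mathrm{lex}$ by the map $\phi : I \mapsto \pi(X^I)$, where $\pi$ sends a matrix in $\mathbb{R}^{n \times (1+m)}$ to its first column.
   Context: Let $\tilde b := [\,b \;\; -\mathrm{Id}_m\,] \in \mathbb{R}^{m \times (1+m)}$. For row vectors $\alpha,\beta \in \mathbb{R}^{1+m}$, $\alpha \leq_{\mathrm{lex}} \beta$ means $\alpha = \beta$ or $\alpha_k < \beta_k$ at the first index $k$ where they differ; for matrices with $1+m$ columns, $X \geq_{\mathrm{lex}} Y$ means $X_i \geq_{\mathrm{lex}} Y_i$ for every row $i$. For $I \subset [m]$, $A_I$, $\tilde b_I$ are the submatrices of rows indexed by $I$. A lex-feasible basis is a set $I \subset [m]$ with $\#I = n$, $A_I$ nonsingular, and $X^I := A_I^{-1}\tilde b_I$ satisfying $A X^I \geq_{\mathrm{lex}} \tilde b$. The lex-graph $G_\mathrm{lex}$ has the lex-feasible bases as vertices, with an edge between $I$ and $I'$ iff $\#(I \cap I') = n-1$. A face of $\mathcal{P}$ is a nonempty set of minimizers over $\mathcal{P}$ of some linear function $x \mapsto \langle c, x\rangle$; vertices and edges are faces of dimension 0 and 1; two vertices $v,w$ are adjacent if the segment $[v,w]$ is an edge. $G_\mathrm{vert}$ is the graph on the vertices of $\mathcal{P}$ with this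 adjacency. The image of a graph $(V,E)$ by $f$ is the graph with vertex set $f(V)$ and edges $\{(f(v),f(w)) : (v,w) \in E,\ f(v) \neq f(w)\}$. *)

From HB Require Import structures.
From mathcomp Require Import all_boot all_order all_algebra.
Set Implicit Arguments. Unset Strict Implicit. Unset Printing Implicit Defensive.
Import Order.TTheory GRing.Theory Num.Theory.
Local Open Scope ring_scope.

Section Defs.
Variables (R : realFieldType) (m n : nat).
Variables (A : 'M[R]_(m, n)) (b : 'cV[R]_m).

Definition inP (x : 'cV[R]_n) : Prop := forall i : 'I_m, b i 0 <= (A *m x) i 0.

Definition polytope : Prop :=
  exists M : R, forall x, inP x -> forall j : 'I_n, `|x j 0| <= M.

Definition btilde : 'M[R]_(m, m.+1) := row_mx b (- 1%:M).

Definition lex_le (k : nat) (u v : 'rV[R]_k) : Prop :=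
  u = v \/ exists j : 'I_k,
    (forall j' : 'I_k, (j' < j)%N -> u 0 j' = v 0 j') /\ u 0 j < v 0 j.

(* Rows of A (resp. btilde) indexed by I, taken in increasing order of index;
   when #|I| = n these are exactly the submatrices A_I and btilde_I. *)
Definition AI (I : {set 'I_m}) : 'M[R]_n :=
  \matrix_(i < n, j < n) nth 0 [seq A k j | k <- enum I] i.
Definition btI (I : {set 'I_m}) : 'M[R]_(n, m.+1) :=
  \matrix_(i < n, j < m.+1) nth 0 [seq btilde k j | k <- enum I] i.

Definition XI (I : {set 'I_m}) : 'M[R]_(n, m.+1) := invmx (AI I) *m btI I.

Definition lex_feasible (I : {set 'I_m}) : Prop :=
  #|I| = n /\ AI I \in unitmx /\
  forall i : 'I_m, lex_le (row i btilde) (row i (A *m XI I)).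

Definition lex_edge (I I' : {set 'I_m}) : Prop :=
  lex_feasible I /\ lex_feasible I' /\ #|I :&: I'| = n.-1.

Definition phi (I : {set 'I_m}) : 'cV[R]_n := col ord0 (XI I).

Definition minimizer (c x : 'cV[R]_n) : Prop :=
  inP x /\ forall y, inP y -> (c^T *m x) 0 0 <= (c^T *m y) 0 0.

Definition is_face (F : 'cV[R]_n -> Prop) : Prop :=
  (exists x, F x) /\ exists c : 'cV[R]_n, forall x, F x <-> minimizer c x.

Definition segment (v w : 'cV[R]_n) : 'cV[R]_n -> Prop :=
  fun x => exists t : R, 0 <= t /\ t <= 1 /\ x = (1 - t) *: v + t *: w.

Definition is_vertex (v : 'cV[R]_n) : Prop := is_face (fun x => x = v).

Definition vert_adj (v w : 'cV[R]_n) : Prop :=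
  is_vertex v /\ is_vertex w /\ v <> w /\ is_face (segment v w).

End Defs.

(* A matrix Y with columns indexed by 0..m is lex-feasible when A Y >=lex btilde,
   i.e. when it is a point of the lexicographically perturbed polyhedron; X^I is such a
   point for a lex-feasible basis I, tight on the rows of I. Its first column is then the
   unique point of P on which the constraints of I are active, hence a vertex.
   Conversely, start from Y = [y | 0] for y in P, where the identity block of btilde
   makes every slack lexicographically positive. Moving Y along a direction d in the
   kernel of the tight rows K by the lexicographic ratio test keeps Y lex-feasible and
   makes one more independent row tight; when d is negative on a constraint active at
   y, the minimal ratio has first entry 0 and y does not move. This is repeated until
   every direction of ker A_K keeps the constraints active at y active. At a vertex y
   that kernel is trivial and K is a lex-feasible basis with image y. At the midpoint y
   of an edge [v, w] it is the line through w - v; since P is bounded, one more pivot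
   along w - v and one along v - w give adjacent bases whose images are vertices on
   that line on either side of y, i.e. w and v.
   Conversely, if I and I' are adjacent with K = I :&: I', the points of P on which
   K is active lie both on the ray from phi I through phi I' and on the ray from phi I'
   through phi I: this face is the segment between them. *)

From HB Require Import structures.
From mathcomp Require Import all_boot all_order all_algebra.
From Stdlib Require Import Classical_Prop.
From mathcomp Require Import zify lra.
Set Implicit Arguments. Unset Strict Implicit. Unset Printing Implicit Defensive.
Import Order.TTheory GRing.Theory Num.Theory.
Local Open Scope ring_scope.

Section MulmxEntry.
Variables (R : comPzRingType) (p q : nat) (M : 'M[R]_(p, q)).
Implicit Types x y : 'cV[R]_q.

Lemma mulmxDrE x y i : (M *m (x + y)) i 0 = (M *m x) i 0 + (M *m y) i 0.
Proof. by rewrite mulmxDr mxE. Qed.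

Lemma mulmxZrE a x i : (M *m (a *: x)) i 0 = a * (M *m x) i 0.
Proof. by rewrite -scalemxAr mxE. Qed.

Lemma mulmxNrE x i : (M *m (- x)) i 0 = - (M *m x) i 0.
Proof. by rewrite mulmxN mxE. Qed.

Lemma mulmxBrE x y i : (M *m (x - y)) i 0 = (M *m x) i 0 - (M *m y) i 0.
Proof. by rewrite mulmxDrE mulmxNrE. Qed.

Lemma mulmx_rowE x i : (M *m x) i 0 = (row i M *m x) 0 0.
Proof. by rewrite -row_mul [RHS]mxE. Qed.

Lemma mulmx_colE r (X : 'M[R]_(q, r)) i j : (M *m col j X) i 0 = (M *m X) i j.
Proof. by rewrite !mxE; apply: eq_bigr => l _; rewrite !mxE. Qed.

End MulmxEntry.

Lemma row_full_ker0P (F : fieldType) p q (M : 'M[F]_(p, q)) :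
  reflect (forall z : 'cV[F]_q, M *m z = 0 -> z = 0) (row_full M).
Proof.
apply: (iffP idP) => [/row_fullP[B BM1] z Mz0 | Mker0].
  by rewrite -[z]mul1mx -BM1 -mulmxA Mz0 mulmx0.
have : row_free M^T.
  apply: inj_row_free => v vM0; apply: trmx_inj; rewrite trmx0; apply: Mker0.
  by rewrite -[M]trmxK -trmx_mul vM0 trmx0.
by rewrite /row_free /row_full mxrank_tr.
Qed.

Lemma scale_injl (F : fieldType) (V : lmodType F) (u : V) a c :
  u != 0 -> a *: u = c *: u -> a = c.
Proof.
move=> un /eqP; rewrite -subr_eq0 -scalerBl scaler_eq0 (negbTE un) orbF subr_eq0.
by move/eqP.
Qed.

Section LexOrder.
Variables (R : realDomainType) (k : nat).
Implicit Types u v w : 'rV[R]_k.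

Definition lex_pos u :=
  exists j : 'I_k, (forall j' : 'I_k, (j' < j)%N -> u 0 j' = 0) /\ 0 < u 0 j.
Definition lex_nneg u := u = 0 \/ lex_pos u.

Lemma lex_posD u v : lex_pos u -> lex_pos v -> lex_pos (u + v).
Proof.
move=> [j1 [u0 u_gt0]] [j2 [v0 v_gt0]].
case: (ltngtP j1 j2) => [lt12|lt21|/val_inj eq12].
- exists j1; split; last by rewrite mxE (v0 _ lt12) addr0.
  by move=> j' lt; rewrite mxE u0 ?v0 ?addr0 //; apply: ltn_trans lt12.
- exists j2; split; last by rewrite mxE (u0 _ lt21) add0r.
  by move=> j' lt; rewrite mxE u0 ?v0 ?addr0 //; apply: ltn_trans lt21.
- subst j2; exists j1; split; last by rewrite mxE addr_gt0.
  by move=> j' lt; rewrite mxE u0 ?v0 ?addr0.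
Qed.

Lemma lex_nnegD u v : lex_nneg u -> lex_nneg v -> lex_nneg (u + v).
Proof.
case=> [->|u_pos]; first by rewrite add0r.
case=> [->|v_pos]; first by rewrite addr0; right.
by right; apply: lex_posD.
Qed.

Lemma lex_nnegZ (a : R) u : 0 <= a -> lex_nneg u -> lex_nneg (a *: u).
Proof.
rewrite le_eqVlt => /orP[/eqP<-|a_gt0]; first by rewrite scale0r; left.
case=> [->|[j [u0 u_gt0]]]; first by rewrite scaler0; left.
right; exists j; split; last by rewrite mxE mulr_gt0.
by move=> j' /u0; rewrite mxE => ->; rewrite mulr0.
Qed.

Lemma lex_nneg_trans u v w : lex_nneg (v - u) -> lex_nneg (w - v) -> lex_nneg (w - u).
Proof. by move=> uv vw; have := lex_nnegD vw uv; rewrite addrA subrK. Qed.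

Lemma lex_nneg_total u : lex_nneg u \/ lex_nneg (- u).
Proof.
have [/existsP[j0 uj0]|u0] := boolP [exists j, u 0 j != 0]; last first.
  left; left; apply/rowP => j; rewrite mxE; apply/eqP; apply: contraNT u0 => uj.
  by apply/existsP; exists j.
have [j uj jmin] :=
  @arg_minnP _ j0 (fun j : 'I_k => u 0 j != 0) (fun j : 'I_k => nat_of_ord j) uj0.
have u_lt : forall j' : 'I_k, (j' < j)%N -> u 0 j' = 0.
  by move=> j' lt; apply/eqP; apply: contraTT lt => uj'; rewrite -leqNgt jmin.
case: (ltgtP (u 0 j) 0) => [neg|pos|/eqP]; last by rewrite (negbTE uj).
- right; right; exists j; split; last by rewrite mxE oppr_gt0.
  by move=> j' /u_lt; rewrite mxE => ->; rewrite oppr0.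
- by left; right; exists j.
Qed.

Lemma lex_argmin (I : eqType) (s : seq I) (f : I -> 'rV[R]_k) x : x \in s ->
  exists2 i, i \in s & forall i', i' \in s -> lex_nneg (f i' - f i).
Proof.
elim: s x => [//|y s IH] x _.
have [->|[z zs]] : s = [::] \/ exists z, z \in s.
- by case: s {IH} => [|z s]; [left | right; exists z; rewrite inE eqxx].
- exists y; first by rewrite inE eqxx.
  by move=> i'; rewrite inE => /eqP->; rewrite subrr; left.
have [i i_s imin] := IH _ zs.
have [yi|iy] := lex_nneg_total (f i - f y).
- exists y; first by rewrite inE eqxx.
  move=> i'; rewrite inE => /orP[/eqP->|/imin]; first by rewrite subrr; left.
  exact: lex_nneg_trans yi.
- exists i; first by rewrite inE i_s orbT.
  by move=> i'; rewrite inE => /orP[/eqP->|/imin //]; rewrite -opprB.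
Qed.

End LexOrder.

Lemma lex_nneg_head (R : realDomainType) k (u : 'rV[R]_k.+1) : lex_nneg u -> 0 <= u 0 ord0.
Proof.
case=> [->|[j [u0 u_gt0]]]; first by rewrite mxE.
have [j0|j_gt0] := posnP j; last by rewrite u0.
have -> : ord0 = j by apply: val_inj; rewrite /= j0.
exact: ltW.
Qed.

Lemma lex_nneg_head_le (R : realDomainType) k (u v : 'rV[R]_k.+1) :
  lex_nneg (v - u) -> u 0 ord0 <= v 0 ord0.
Proof. by move/lex_nneg_head; rewrite !mxE subr_ge0. Qed.

Lemma lex_leE (R : realFieldType) k (u v : 'rV[R]_k) : lex_le u v <-> lex_nneg (v - u).
Proof.
split.
- case=> [->|[j [uv uv_lt]]]; first by left; rewrite subrr.
  right; exists j; split; last by rewrite !mxE subr_gt0.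
  by move=> j' /uv; rewrite !mxE => ->; rewrite subrr.
- case=> [/eqP|[j [uv uv_lt]]]; first by rewrite subr_eq0 => /eqP ->; left.
  right; exists j; split; last by move: uv_lt; rewrite !mxE subr_gt0.
  by move=> j' /uv /eqP; rewrite !mxE subr_eq0 => /eqP.
Qed.

Section Tableau.
Variables (R : realFieldType) (m n : nat) (A : 'M[R]_(m, n)) (b : 'cV[R]_m).
Implicit Types (Y : 'M[R]_(n, m.+1)) (I K : {set 'I_m}) (d : 'cV[R]_n).

Definition slack Y i : 'rV[R]_m.+1 := row i (A *m Y) - row i (btilde b).
Definition lex_feas Y := forall i, lex_nneg (slack Y i).
Definition tight Y K := {in K, forall k, slack Y k = 0}.

(* Stands for A_K: same kernel and rank, without reindexing the rows. *)
Definition Amask K : 'M[R]_(m, n) := diag_mx (\row_i (i \in K)%:R) *m A.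

Lemma row_Amask K j : row j (Amask K) = (j \in K)%:R *: row j A.
Proof. by apply/rowP => l; rewrite /Amask mul_diag_mx !mxE. Qed.

Lemma Amask_mulE K d i : (Amask K *m d) i 0 = (i \in K)%:R * (A *m d) i 0.
Proof. by rewrite /Amask -mulmxA mul_diag_mx !mxE. Qed.

Lemma Amask_ker K d : Amask K *m d = 0 <-> {in K, forall k, (A *m d) k 0 = 0}.
Proof.
split=> [Kd0 k kK | Kd0].
  by have /matrixP/(_ k ord0) := Kd0; rewrite Amask_mulE kK mul1r => ->; rewrite mxE.
apply/matrixP => i j; rewrite (ord1 j) Amask_mulE [RHS]mxE.
by case: (boolP (i \in K)) => [/Kd0 ->|_]; rewrite ?mulr0 ?mul0r.
Qed.

Lemma Amask_ker_notin K d i : Amask K *m d = 0 -> (A *m d) i 0 != 0 -> i \notin K.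
Proof. by move=> /Amask_ker Kd0; apply: contra => /Kd0 ->. Qed.

Lemma Amask_set0 : Amask set0 = 0.
Proof. by apply/matrixP => i j; rewrite /Amask mul_diag_mx !mxE in_set0 mul0r. Qed.

Lemma rank_Amask_setU1 K d i : Amask K *m d = 0 -> (A *m d) i 0 != 0 ->
  \rank (Amask K) = #|K| -> \rank (Amask (i |: K)) = #|i |: K|.
Proof.
move=> Kd0 di0 rkK.
have iK := Amask_ker_notin Kd0 di0.
have row_sub_Amask K' j : j \in K' -> (row j A <= Amask K')%MS.
  by move=> jK'; rewrite -[row j A]scale1r -[1]/(true%:R) -jK' -row_Amask row_sub.
have KiK : (Amask K <= Amask (i |: K))%MS.
  apply/row_subP => j; rewrite row_Amask.
  case: (boolP (j \in K)) => jK; rewrite ?scale0r ?sub0mx // scale1r.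
  by rewrite row_sub_Amask // setU1r.
have iKK : ~~ (Amask (i |: K) <= Amask K)%MS.
  apply/negP => /(submx_trans (row_sub_Amask _ _ (setU11 i K)))/submxP[D iD].
  by move: di0; rewrite mulmx_rowE iD -mulmxA Kd0 mulmx0 mxE eqxx.
have rk_lt : (\rank (Amask K) < \rank (Amask (i |: K)))%N.
  by apply: rank_ltmx; rewrite ltmxE KiK iKK.
have rk_le : (\rank (Amask (i |: K)) <= \rank (Amask K) + 1)%N.
  have iK_sub : (Amask (i |: K) <= Amask K + row i A)%MS.
    apply/row_subP => j; rewrite row_Amask in_setU1.
    have [->|ji] /= := eqVneq j i; first by rewrite scale1r addsmxSr.
    case: (boolP (j \in K)) => jK; rewrite ?scale0r ?sub0mx // scale1r.
    exact: submx_trans (row_sub_Amask _ _ jK) (addsmxSl _ _).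
  apply: leq_trans (mxrankS iK_sub) _; apply: leq_trans (mxrank_adds_leqif _ _).1 _.
  by rewrite leq_add2l rank_leq_row.
by rewrite cardsU1 iK add1n -rkK; apply/eqP; rewrite eqn_leq rk_lt andbT -addn1 rk_le.
Qed.

Lemma slack_update Y d (t : 'rV[R]_m.+1) i :
  slack (Y + d *m t) i = slack Y i + (A *m d) i 0 *: t.
Proof.
rewrite /slack mulmxDr mulmxA linearD /= addrAC; congr (_ + _).
by apply/rowP => j; rewrite row_mul !mxE big_ord1 !mxE.
Qed.

Lemma btilde_head i : btilde b i ord0 = b i 0.
Proof. by rewrite /btilde mxE; case: splitP => [j _|//]; rewrite (ord1 j). Qed.

Lemma slack_head Y i : slack Y i 0 ord0 = (A *m col ord0 Y) i 0 - b i 0.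
Proof. by rewrite mulmx_colE -btilde_head /slack !mxE. Qed.

Lemma col_update Y d (t : 'rV[R]_m.+1) :
  col ord0 (Y + d *m t) = col ord0 Y + t 0 ord0 *: d.
Proof. by apply/matrixP => i j; rewrite !mxE big_ord1 (ord1 j) mulrC. Qed.

Lemma slack_init (y0 : 'cV[R]_n) i :
  slack (row_mx y0 0) i = row_mx (row i (A *m y0) - row i b) (row i 1%:M).
Proof.
apply/rowP => j; rewrite /slack /btilde !mxE.
case: splitP => [j1 j1E|k kE]; rewrite !mxE.
  congr (_ - _); apply: eq_bigr => l _; rewrite mxE.
  case: splitP => [j2 _|k2 k2E]; first by rewrite (ord1 j1) (ord1 j2).
  by move: (ltn_ord j1); rewrite -j1E k2E.
rewrite big1 ?sub0r ?opprK // => l _; rewrite mxE.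
case: splitP => [j2 j2E|k2 _]; last by rewrite mxE mulr0.
by move: (ltn_ord j2); rewrite -j2E kE.
Qed.

Lemma lex_feas_init (y0 : 'cV[R]_n) : inP A b y0 -> lex_feas (row_mx y0 0).
Proof.
move=> y0P i; rewrite slack_init; right.
have [tight_i|slack_i] := eqVneq ((A *m y0) i 0) (b i 0).
- exists (rshift 1 i); split=> [j ji|].
  + rewrite mxE; case: splitP => [j1 _|k /= jk].
      by rewrite (ord1 j1) !mxE -tight_i mxE subrr.
    by rewrite !mxE (_ : i == k = false) //; apply: contraTF ji => /eqP->; rewrite jk ltnn.
  + rewrite mxE; case: splitP => [j1 /= j1E|k /= [/val_inj <-]].
      by move: (ltn_ord j1); rewrite -j1E.
    by rewrite !mxE eqxx ltr01.
- have b_lt : b i 0 < (A *m y0) i 0 by rewrite lt_neqAle eq_sym slack_i y0P.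
  exists ord0; split=> [//|]; rewrite mxE; case: splitP => [j1 _|//].
  by move: b_lt; rewrite (ord1 j1) !mxE subr_gt0.
Qed.

Lemma col_init (y0 : 'cV[R]_n) : col ord0 (row_mx y0 (0 : 'M_(n, m))) = y0.
Proof.
apply/matrixP => i j; rewrite (ord1 j) !mxE.
by case: splitP => [j1 _|//]; rewrite (ord1 j1).
Qed.

Definition ratio Y d i : 'rV[R]_m.+1 := (- (A *m d) i 0)^-1 *: slack Y i.
Definition pivot Y d i := Y + d *m ratio Y d i.

Definition ratio_min Y d i := (A *m d) i 0 < 0 /\
  forall i', (A *m d) i' 0 < 0 -> lex_nneg (ratio Y d i' - ratio Y d i).

Lemma ratio_test Y d i0 : (A *m d) i0 0 < 0 -> exists i, ratio_min Y d i.
Proof.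
move=> di0; pose s := [seq i <- enum 'I_m | (A *m d) i 0 < 0].
have mem_s i : (i \in s) = ((A *m d) i 0 < 0) by rewrite mem_filter mem_enum andbT.
have [|i] := lex_argmin (ratio Y d) (_ : i0 \in s); first by rewrite mem_s.
by rewrite mem_s => di imin; exists i; split=> // i'; rewrite -mem_s; apply: imin.
Qed.

Lemma ratio_nneg Y d i : lex_feas Y -> (A *m d) i 0 < 0 -> lex_nneg (ratio Y d i).
Proof. by move=> Yfeas di; apply: lex_nnegZ; rewrite ?invr_ge0 ?oppr_ge0 ?ltW. Qed.

Lemma lex_feas_pivot Y d i : lex_feas Y -> ratio_min Y d i -> lex_feas (pivot Y d i).
Proof.
move=> Yfeas [di imin] i'; rewrite slack_update.
have [di'|di'] := ltP ((A *m d) i' 0) 0.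
  have -> : slack Y i' + (A *m d) i' 0 *: ratio Y d i =
      (- (A *m d) i' 0) *: (ratio Y d i' - ratio Y d i).
    have -> : slack Y i' = (- (A *m d) i' 0) *: ratio Y d i'.
      by rewrite /ratio scalerA divff ?scale1r // oppr_eq0 lt_eqF.
    by rewrite scalerBr !scaleNr opprK.
  by apply: lex_nnegZ; [rewrite oppr_ge0 ltW | apply: imin].
by apply: lex_nnegD => //; apply: lex_nnegZ => //; apply: ratio_nneg.
Qed.

Lemma tight_pivot Y K d i : tight Y K -> Amask K *m d = 0 -> (A *m d) i 0 < 0 ->
  tight (pivot Y d i) (i |: K).
Proof.
move=> YK /Amask_ker Kd0 di k; rewrite in_setU1 slack_update => /predU1P[->|kK].
  by rewrite /ratio scalerA invrN mulrN divff ?lt_eqF // scaleN1r subrr.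
by rewrite Kd0 // scale0r addr0 YK.
Qed.

Definition partial_basis y0 Y K :=
  [/\ lex_feas Y, col ord0 Y = y0, tight Y K & \rank (Amask K) = #|K|].

Lemma partial_basis_pivot y0 Y K d i :
  partial_basis y0 Y K -> Amask K *m d = 0 -> ratio_min Y d i ->
  partial_basis (y0 + ratio Y d i 0 ord0 *: d) (pivot Y d i) (i |: K).
Proof.
move=> [Yfeas <- YK rkK] Kd0 imin; split.
- exact: lex_feas_pivot.
- exact: col_update.
- exact: tight_pivot imin.1.
- by apply: rank_Amask_setU1 Kd0 _ rkK; rewrite lt_eqF ?imin.1.
Qed.

Lemma partial_basis_card y0 Y K : partial_basis y0 Y K -> (#|K| <= n)%N.
Proof. by move=> [_ _ _ <-]; apply: rank_leq_col. Qed.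

Definition keeps_active (y0 d : 'cV[R]_n) :=
  forall i, (A *m y0) i 0 = b i 0 -> (A *m d) i 0 = 0.

(* The ratio of an active row of y0 has first entry 0, so the lexicographic
   ratio test does not move the first column. *)
Lemma partial_basis_grow y0 Y K d i0 :
  partial_basis y0 Y K -> Amask K *m d = 0 ->
  (A *m y0) i0 0 = b i0 0 -> (A *m d) i0 0 != 0 ->
  exists Y' i, i \notin K /\ partial_basis y0 Y' (i |: K).
Proof.
move=> B Kd0 y0i0 di0_neq.
wlog di0 : d Kd0 {di0_neq} / (A *m d) i0 0 < 0 => [wlog_neg|].
  have [|di0_gt0] := ltP ((A *m d) i0 0) 0; first exact: wlog_neg.
  apply: (wlog_neg (- d)); first by rewrite mulmxN Kd0 oppr0.
  by rewrite mulmxNrE oppr_lt0 lt_neqAle eq_sym di0_neq.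
have [i imin] := ratio_test Y di0.
have [Yfeas Ycol _ _] := B.
have ri0_head : ratio Y d i0 0 ord0 = 0.
  by rewrite /ratio mxE slack_head Ycol y0i0 subrr mulr0.
have ri_head : ratio Y d i 0 ord0 = 0.
  have := lex_nneg_head_le (imin.2 _ di0); rewrite ri0_head => ri_le0.
  by apply/eqP; rewrite eq_le ri_le0 (lex_nneg_head (ratio_nneg Yfeas imin.1)).
exists (pivot Y d i), i; split; first by apply: Amask_ker_notin Kd0 _; rewrite lt_eqF ?imin.1.
by have := partial_basis_pivot B Kd0 imin; rewrite ri_head scale0r addr0.
Qed.

Lemma purify y0 : inP A b y0 ->
  exists Y K, partial_basis y0 Y K /\ forall d, Amask K *m d = 0 -> keeps_active y0 d.
Proof.
move=> y0P.
have final_or_grow Y K : partial_basis y0 Y K ->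
    (forall d, Amask K *m d = 0 -> keeps_active y0 d) \/
    exists Y' i, i \notin K /\ partial_basis y0 Y' (i |: K).
  move=> B; case: (classic (exists d i, [/\ Amask K *m d = 0, (A *m y0) i 0 = b i 0
                                           & (A *m d) i 0 != 0])) => [|none].
    by move=> [d [i [Kd0 y0i di]]]; right; apply: partial_basis_grow B Kd0 y0i di.
  left=> d Kd0 i y0i; apply/eqP; apply: contraT => di; exfalso; apply: none.
  by exists d, i.
suff grow N Y K : (n - #|K| <= N)%N -> partial_basis y0 Y K ->
    exists Y K, partial_basis y0 Y K /\ forall d, Amask K *m d = 0 -> keeps_active y0 d.
  apply: (grow n (row_mx y0 0) set0); first by rewrite leq_subr.
  split; [exact: lex_feas_init | exact: col_init | by move=> k; rewrite inE |].
  by rewrite Amask_set0 mxrank0 cards0.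
elim: N Y K => [|N IH] Y K KN B; have [final|[Y' [i [iK B']]]] := final_or_grow Y K B;
  try by exists Y, K.
all: have := partial_basis_card B'; rewrite cardsU1 iK add1n => Kn.
- by move: KN Kn; lia.
- by apply: (IH Y' (i |: K)) => //; rewrite cardsU1 iK add1n; move: KN Kn; lia.
Qed.

Lemma row_AI I j : #|I| = n -> exists2 i, i \in I &
  row j (AI A I) = row i A /\ row j (btI n b I) = row i (btilde b).
Proof.
move=> In; have j_lt : (j < size (enum I))%N by rewrite -cardE In.
have [i0 _] : exists i0 : 'I_m, true by case: (enum I) j_lt => [//|i0 _] _; exists i0.
exists (nth i0 (enum I) j); first by rewrite -mem_enum mem_nth.
by split; apply/rowP => l; rewrite [LHS]mxE [LHS]mxE (nth_map i0) // [RHS]mxE.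
Qed.

Lemma row_AI_mem I i : #|I| = n -> i \in I -> exists j : 'I_n,
  row j (AI A I) = row i A /\ row j (btI n b I) = row i (btilde b).
Proof.
move=> In iI; have i_lt : (index i (enum I) < size (enum I))%N by rewrite index_mem mem_enum.
have i_ltn : (index i (enum I) < n)%N by rewrite -In cardE.
exists (Ordinal i_ltn).
split; apply/rowP => l;
  by rewrite [LHS]mxE [LHS]mxE (nth_map i) // [RHS]mxE /= nth_index ?mem_enum.
Qed.

Lemma AI_ker I (z : 'cV[R]_n) : #|I| = n -> AI A I *m z = 0 <-> Amask I *m z = 0.
Proof.
move=> In; rewrite Amask_ker; split=> [Iz0 k kI | Iz0].
  have [j [Ej _]] := row_AI_mem In kI.
  by rewrite mulmx_rowE -Ej -mulmx_rowE Iz0 mxE.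
apply/matrixP => j c; rewrite (ord1 c) [RHS]mxE mulmx_rowE.
by have [i iI [-> _]] := row_AI j In; rewrite -mulmx_rowE Iz0.
Qed.

Lemma AI_unit I : #|I| = n -> (AI A I \in unitmx) = row_full (Amask I).
Proof.
move=> In; rewrite -row_full_unit.
by apply/row_full_ker0P/row_full_ker0P => ker0 z /(AI_ker z In) => /ker0.
Qed.

Definition active (x : 'cV[R]_n) K := {in K, forall k, (A *m x) k 0 = b k 0}.

Lemma tight_active Y K : tight Y K -> active (col ord0 Y) K.
Proof. by move=> YK k kK; apply/eqP; rewrite -subr_eq0 -slack_head YK // mxE. Qed.

Lemma lex_feas_inP Y : lex_feas Y -> inP A b (col ord0 Y).
Proof. by move=> Yfeas i; rewrite -subr_ge0 -slack_head; apply: lex_nneg_head. Qed.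

Lemma partial_basis_lex_feasible y0 Y K : partial_basis y0 Y K -> row_full (Amask K) ->
  lex_feasible A b K /\ phi A b K = y0.
Proof.
move=> [Yfeas Ycol YK rkK] full.
have Kn : #|K| = n by rewrite -rkK; apply/eqP.
have AY : AI A K *m Y = btI n b K.
  apply/row_matrixP => j; have [i iK [Ej Eb]] := row_AI j Kn.
  by rewrite row_mul Ej Eb -row_mul; apply/eqP; rewrite -subr_eq0; apply/eqP; apply: YK.
have XY : XI A b K = Y by rewrite /XI -AY mulKmx ?AI_unit.
split; last by rewrite /phi XY.
split=> //; split; first by rewrite AI_unit.
by move=> i; rewrite XY; apply/lex_leE; apply: Yfeas.
Qed.

Lemma lex_feasible_partial_basis I : lex_feasible A b I ->
  partial_basis (phi A b I) (XI A b I) I /\ row_full (Amask I).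
Proof.
move=> [In [Iunit Ilex]]; have full : row_full (Amask I) by rewrite -AI_unit.
have AX : AI A I *m XI A b I = btI n b I by rewrite /XI mulKVmx.
split=> //; split=> //.
- by move=> i; apply/lex_leE.
- move=> k kI; have [j [Ej Eb]] := row_AI_mem In kI.
  by rewrite /slack row_mul -Ej -Eb -row_mul AX subrr.
- by rewrite In; apply/eqP.
Qed.

End Tableau.

Lemma finite_pos_lbound (R : realDomainType) (T : finType) (P : pred T) (f : T -> R) :
  (forall i, P i -> 0 < f i) -> exists2 s, 0 < s & forall i, P i -> s <= f i.
Proof.
move=> f_gt0.
suff [s s_gt0 sf] : exists2 s, 0 < s & forall i, i \in enum T -> P i -> s <= f i.
  by exists s => // i; apply: sf; rewrite mem_enum.
elim: (enum T) => [|x r [s s_gt0 sf]]; first by exists 1.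
have [Px|nPx] := boolP (P x).
- exists (Num.min s (f x)); first by rewrite lt_min s_gt0 f_gt0.
  move=> i; rewrite inE ge_min => /predU1P[->|/sf ir] Pi; first by rewrite lexx orbT.
  by rewrite ir.
- exists s => // i; rewrite inE => /predU1P[->|/sf //]; by rewrite (negbTE nPx).
Qed.

Lemma setU1_setI_card (T : finType) (I J : {set T}) :
  #|I :&: J|.+1 = #|I| -> exists i, I = i |: (I :&: J).
Proof.
move=> IJ; have /cards1P[i iE] : #|I :\: J| == 1%N by rewrite cardsD -IJ subSnn.
by exists i; rewrite -iE setUC setID.
Qed.

Lemma setU1I (T : finType) (K : {set T}) i j : i != j -> (i |: K) :&: (j |: K) = K.
Proof.
move=> ij; apply/setP => x; rewrite !inE.
have [->|_] /= := eqVneq x i; first by rewrite (negbTE ij).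
by case: (x \in K); rewrite ?orbT.
Qed.

Section Polytope.
Variables (R : realFieldType) (m n : nat) (A : 'M[R]_(m, n)) (b : 'cV[R]_m).
Implicit Types (x y v w d : 'cV[R]_n) (I K : {set 'I_m}).

Lemma keeps_active_step y0 d : inP A b y0 -> keeps_active A b y0 d ->
  exists2 s, 0 < s & inP A b (y0 + s *: d) /\ inP A b (y0 - s *: d).
Proof.
move=> y0P y0d.
pose gap i := ((A *m y0) i 0 - b i 0) / (`|(A *m d) i 0| + 1).
have [s s_gt0 s_gap] : exists2 s, 0 < s & forall i, (A *m y0) i 0 != b i 0 -> s <= gap i.
  apply: finite_pos_lbound => i /= y0i; apply: divr_gt0; last by rewrite ltr_wpDl.
  by rewrite subr_gt0 lt_neqAle eq_sym y0i y0P.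
have s_bound i : s * `|(A *m d) i 0| <= (A *m y0) i 0 - b i 0.
  have [y0i|y0i] := eqVneq ((A *m y0) i 0) (b i 0).
    by rewrite y0d // normr0 mulr0 y0i subrr.
  apply: le_trans (_ : s * (`|(A *m d) i 0| + 1) <= _).
    by rewrite ler_pM2l // lerDl.
  by rewrite -ler_pdivlMr ?ltr_wpDl // s_gap.
exists s => //; split=> i; have := s_bound i.
- rewrite mulmxDrE mulmxZrE.
  have : s * - (A *m d) i 0 <= s * `|(A *m d) i 0| by rewrite ler_pM2l // -normrN ler_norm.
  lra.
- rewrite mulmxBrE mulmxZrE.
  have : s * (A *m d) i 0 <= s * `|(A *m d) i 0| by rewrite ler_pM2l // ler_norm.
  lra.
Qed.

Lemma keeps_active_minimizer c y0 d : minimizer A b c y0 -> keeps_active A b y0 d ->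
  exists2 s, 0 < s & minimizer A b c (y0 + s *: d).
Proof.
move=> [y0P y0min] y0d; have [s s_gt0 [y0dP y0dP']] := keeps_active_step y0P y0d.
exists s => //; split=> // y yP.
have := y0min _ y0dP; have := y0min _ y0dP'; have := y0min _ yP.
rewrite mulmxBrE mulmxDrE !mulmxZrE; lra.
Qed.

Lemma segmentE v w x :
  segment v w x <-> exists t, [/\ 0 <= t, t <= 1 & x = v + t *: (w - v)].
Proof.
have E t : (1 - t) *: v + t *: w = v + t *: (w - v).
  by rewrite scalerBl scale1r scalerBr addrAC addrA.
by split=> [[t [t0 [t1 ->]]]|[t [t0 t1 ->]]]; exists t; rewrite E.
Qed.

Definition tight_obj K : 'cV[R]_n := (Amask A K)^T *m const_mx 1.

Lemma tight_objE K y : ((tight_obj K)^T *m y) 0 0 = \sum_(i in K) (A *m y) i 0.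
Proof.
rewrite /tight_obj trmx_mul trmxK -mulmxA mxE [RHS]big_mkcond; apply: eq_bigr => i _.
by rewrite Amask_mulE !mxE mul1r; case: (i \in K); rewrite ?mul1r ?mul0r.
Qed.

Lemma minimizer_tight_obj K x y : inP A b x -> active A b x K ->
  minimizer A b (tight_obj K) y <-> inP A b y /\ active A b y K.
Proof.
move=> xP xK.
have objB (z : 'cV[R]_n) : ((tight_obj K)^T *m z) 0 0 - ((tight_obj K)^T *m x) 0 0 =
    \sum_(i in K) ((A *m z) i 0 - b i 0).
  by rewrite !tight_objE sumrB (eq_bigr _ xK).
have gap_ge0 z : inP A b z -> 0 <= \sum_(i in K) ((A *m z) i 0 - b i 0).
  by move=> zP; apply: sumr_ge0 => i _; rewrite subr_ge0.
split=> [[yP ymin]|[yP yK]].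
  split=> // k kK; apply/eqP; rewrite -subr_eq0; apply/eqP.
  have : \sum_(i in K) ((A *m y) i 0 - b i 0) = 0.
    by apply/eqP; rewrite eq_le gap_ge0 // andbT -objB subr_le0 ymin.
  move/psumr_eq0P; apply=> // i _; by rewrite subr_ge0.
have yx : ((tight_obj K)^T *m y) 0 0 = ((tight_obj K)^T *m x) 0 0.
  by apply/eqP; rewrite -subr_eq0 objB big1 // => i iK; rewrite yK ?subrr.
by split=> // z zP; rewrite yx -subr_ge0 objB gap_ge0.
Qed.

Lemma vertex_inP v : is_vertex A b v -> inP A b v.
Proof. by move=> [_ [c vc]]; have [] := proj1 (vc v) erefl. Qed.

Lemma lex_feasible_inP I : lex_feasible A b I -> inP A b (phi A b I).
Proof. by move=> /lex_feasible_partial_basis[[Xfeas _ _ _] _]; apply: lex_feas_inP. Qed.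

Lemma lex_feasible_active I : lex_feasible A b I -> active A b (phi A b I) I.
Proof. by move=> /lex_feasible_partial_basis[[_ _ XI_tight _] _]; apply: tight_active. Qed.

Lemma lex_feasible_ker0 I (z : 'cV[R]_n) : lex_feasible A b I ->
  {in I, forall k, (A *m z) k 0 = 0} -> z = 0.
Proof. by move=> /lex_feasible_partial_basis[_ /row_full_ker0P ker0] /Amask_ker /ker0. Qed.

Lemma lex_feasible_vertex I : lex_feasible A b I -> is_vertex A b (phi A b I).
Proof.
move=> LI; have xP := lex_feasible_inP LI; have xI := lex_feasible_active LI.
split; first by exists (phi A b I).
exists (tight_obj I) => z; rewrite (minimizer_tight_obj _ xP xI).
split=> [->//|[_ zI]]; apply/eqP; rewrite -subr_eq0; apply/eqP/(lex_feasible_ker0 LI) => k kI.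
by rewrite mulmxBrE zI // xI // subrr.
Qed.

Lemma vertex_lex_feasible v : is_vertex A b v ->
  exists I, lex_feasible A b I /\ phi A b I = v.
Proof.
move=> [_ [c vc]]; have vmin : minimizer A b c v by apply/vc.
have [Y [K [B Kactive]]] := purify vmin.1.
have full : row_full (Amask A K).
  apply/row_full_ker0P => z /Kactive vz.
  have [s s_gt0 /vc] := keeps_active_minimizer vmin vz.
  by move/eqP; rewrite addrC -subr_eq0 addrK scaler_eq0 gt_eqF // => /eqP.
by exists K; apply: partial_basis_lex_feasible B full.
Qed.

Lemma polytope_exit_row y d : polytope A b -> inP A b y -> d != 0 ->
  exists i, (A *m d) i 0 < 0.
Proof.
move=> [M boundM] yP d_neq0.
have [/existsP[i di]|/existsPn d_nneg] := boolP [exists i, (A *m d) i 0 < 0].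
  by exists i.
have [/existsP[j dj]|/existsPn d0] := boolP [exists j, d j 0 != 0]; last first.
  move/negP: d_neq0; case; apply/eqP/matrixP => j c.
  by rewrite (ord1 c) mxE; apply/eqP/negPn/d0.
have M_ge0 : 0 <= M := le_trans (normr_ge0 _) (boundM y yP j).
have dj_gt0 : 0 < `|d j 0| by rewrite normr_gt0.
pose t := (M + `|y j 0| + 1) / `|d j 0|.
have t_ge0 : 0 <= t by rewrite divr_ge0 // !addr_ge0.
have ytP : inP A b (y + t *: d).
  move=> i; rewrite mulmxDrE mulmxZrE; have := yP i.
  have : 0 <= t * (A *m d) i 0 by rewrite mulr_ge0 // leNgt d_nneg.
  lra.
have := boundM _ ytP j; rewrite !mxE.
have td : `|t * d j 0| = M + `|y j 0| + 1 by rewrite normrM ger0_norm // divfK ?gt_eqF.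
have := ler_normB (y j 0 + t * d j 0) (y j 0); rewrite addrAC subrr add0r td; lra.
Qed.

Lemma vertex_extreme x v w t : is_vertex A b x -> inP A b v -> inP A b w -> v != w ->
  0 < t -> t < 1 -> x = v + t *: (w - v) -> False.
Proof.
move=> [_ [c xc]] vP wP vw t_gt0 t_lt1 xE.
have [xP xmin] : minimizer A b c x by apply/xc.
have := xmin v vP; have := xmin w wP.
have -> : (c^T *m x) 0 0 = (c^T *m v) 0 0 + t * ((c^T *m w) 0 0 - (c^T *m v) 0 0).
  by rewrite xE mulmxDrE mulmxZrE mulmxBrE.
move=> xw xv; have cv : (c^T *m v) 0 0 = (c^T *m x) 0 0.
  by rewrite xE mulmxDrE mulmxZrE mulmxBrE; nra.
have /xc vx : minimizer A b c v by split=> // y yP; rewrite cv xmin.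
have : t *: (w - v) = 0 by apply: (addrI v); rewrite addr0 -xE vx.
move/eqP; rewrite scaler_eq0 gt_eqF //= subr_eq0 => /eqP wv.
by rewrite wv eqxx in vw.
Qed.

Lemma active_ray I K i w y : lex_feasible A b I -> I = i |: K ->
  inP A b w -> active A b w K -> w != phi A b I -> inP A b y -> active A b y K ->
  exists2 la, 0 <= la & y = phi A b I + la *: (w - phi A b I).
Proof.
move=> LI IE wP wK wx yP yK; have xI := lex_feasible_active LI.
set x := phi A b I in xI wx *.
have KI : {subset K <= I} by move=> k kK; rewrite IE setU1r.
have iI : i \in I by rewrite IE setU11.
have uK : {in K, forall k, (A *m (w - x)) k 0 = 0}.
  by move=> k kK; rewrite mulmxBrE wK // xI ?KI // subrr.
have ui_neq0 : (A *m (w - x)) i 0 != 0.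
  apply: contra wx => /eqP ui0; rewrite -subr_eq0; apply/eqP/(lex_feasible_ker0 LI) => k.
  by rewrite IE => /setU1P[->|/uK].
have ui_gt0 : 0 < (A *m (w - x)) i 0.
  by rewrite lt0r ui_neq0 mulmxBrE xI // subr_ge0 wP.
pose la := (A *m (y - x)) i 0 / (A *m (w - x)) i 0.
exists la; first by rewrite divr_ge0 ?(ltW ui_gt0) // mulmxBrE xI // subr_ge0 yP.
have : y - x - la *: (w - x) = 0.
  apply: (lex_feasible_ker0 LI) => k; rewrite IE mulmxBrE mulmxZrE.
  case/setU1P=> [->|kK]; first by rewrite divfK // subrr.
  by rewrite uK // mulr0 subr0 mulmxBrE yK // xI ?KI // subrr.
by move/eqP; rewrite subr_eq0 => /eqP <-; rewrite addrC subrK.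
Qed.

Lemma lex_edge_vert_adj I I' : lex_edge A b I I' -> phi A b I != phi A b I' ->
  vert_adj A b (phi A b I) (phi A b I').
Proof.
move=> [LI [LI' IIn]] vw; set v := phi A b I in vw *; set w := phi A b I' in vw *.
have n_gt0 : (0 < n)%N.
  rewrite lt0n; apply: contra vw => /eqP n0.
  by rewrite /v /w (cards0_eq (etrans LI.1 n0)) (cards0_eq (etrans LI'.1 n0)).
set K := I :&: I'.
have vK : active A b v K by move=> k /setIP[kI _]; apply: lex_feasible_active.
have wK : active A b w K by move=> k /setIP[_ kI']; apply: (lex_feasible_active LI').
have vP := lex_feasible_inP LI; have wP := lex_feasible_inP LI'.
do 2!(split; first exact: lex_feasible_vertex); split; first exact/eqP.
split; first by exists v; apply/segmentE; exists 0; rewrite scale0r addr0 lexx ler01.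
exists (tight_obj K) => y; rewrite (minimizer_tight_obj _ vP vK) segmentE.
split=> [[t [t_ge0 t_le1 ->]]|[yP yK]].
  split=> [k|k kK]; rewrite mulmxDrE mulmxZrE mulmxBrE; last first.
    by rewrite vK // wK // subrr mulr0 addr0.
  by have := vP k; have := wP k; nra.
have [i IE] : exists i, I = i |: K by apply: setU1_setI_card; rewrite IIn prednK ?LI.1.
have [i' I'E] : exists i', I' = i' |: K.
  by rewrite /K setIC; apply: setU1_setI_card; rewrite setIC IIn prednK ?LI'.1.
have wv : w != v by rewrite eq_sym.
have [la la_ge0 yE] := active_ray LI IE wP wK wv yP yK.
have [mu mu_ge0 yE'] := active_ray LI' I'E vP vK vw yP yK.
have la_mu : la = 1 - mu.
  apply: (@scale_injl _ _ (w - v)); first by rewrite subr_eq0.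
  by rewrite -[la *: _](addrK v) (addrC _ v) -yE yE' scalerBl scale1r addrAC -scalerN opprB.
by exists la; split=> //; rewrite la_mu; lra.
Qed.

Section EdgeFace.
Variables (c v w : 'cV[R]_n).
Hypothesis vw_face : forall x, segment v w x <-> minimizer A b c x.

Lemma edge_face_endpoints : minimizer A b c v /\ minimizer A b c w.
Proof.
split; apply/vw_face/segmentE; [exists 0 | exists 1];
  by rewrite ?scale0r ?addr0 ?scale1r ?(addrC v) ?subrK lexx ler01.
Qed.

Lemma edge_face_directions d : keeps_active A b (v + 2^-1 *: (w - v)) d ->
  exists la, d = la *: (w - v).
Proof.
have ymin : minimizer A b c (v + 2^-1 *: (w - v)).
  by apply/vw_face/segmentE; exists 2^-1; split=> //; lra.
move=> /(keeps_active_minimizer ymin)[s s_gt0 /vw_face/segmentE[t [_ _ E]]].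
exists (s^-1 * (t - 2^-1)); apply: (scalerI (lt0r_neq0 s_gt0)).
rewrite scalerA mulrA divff ?gt_eqF // mul1r scalerBl.
by apply: (addrI (v + 2^-1 *: (w - v))); rewrite E addrCA addrK addrC.
Qed.

Lemma edge_face_vertex tau : v != w -> is_vertex A b (v + tau *: (w - v)) ->
  tau = 0 \/ tau = 1.
Proof.
move=> vw xV; have [[vP vmin] [wP wmin]] := edge_face_endpoints.
have cu : (c^T *m (w - v)) 0 0 = 0.
  by have := vmin w wP; have := wmin v vP; rewrite mulmxBrE; lra.
have xmin : minimizer A b c (v + tau *: (w - v)).
  split; first exact: vertex_inP.
  by move=> y yP; rewrite mulmxDrE mulmxZrE cu mulr0 addr0 vmin.
have [t [t_ge0 t_le1 E]] := proj1 (segmentE _ _ _) (proj2 (vw_face _) xmin).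
have -> : tau = t.
  by apply: (@scale_injl _ _ (w - v)); [rewrite subr_eq0 eq_sym | apply: addrI E].
have [t0|t_gt0] := eqVneq t 0; first by left.
have [t1|t_lt1] := eqVneq t 1; first by right.
exfalso; apply: (vertex_extreme xV vP wP vw _ _ E).
  by rewrite lt_neqAle eq_sym t_gt0.
by rewrite lt_neqAle t_lt1.
Qed.

End EdgeFace.

Lemma line_pivot y0 Y K d : polytope A b -> partial_basis A b y0 Y K ->
  Amask A K *m d = 0 -> d != 0 -> (forall z, Amask A K *m z = 0 -> exists la, z = la *: d) ->
  exists j s, [/\ j \notin K, 0 <= s, (A *m d) j 0 < 0,
                 lex_feasible A b (j |: K) & phi A b (j |: K) = y0 + s *: d].
Proof.
move=> Pbd B Kd0 d_neq0 Kline.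
have [Yfeas Ycol _ _] := B.
have y0P : inP A b y0 by rewrite -Ycol; apply: lex_feas_inP.
have [i0 di0] := polytope_exit_row Pbd y0P d_neq0.
have [j [dj jmin]] := ratio_test b Y di0.
have full : row_full (Amask A (j |: K)).
  apply/row_full_ker0P => z /Amask_ker zjK.
  have [la zE] : exists la, z = la *: d.
    by apply/Kline/Amask_ker => k kK; apply: zjK; rewrite setU1r.
  have : (A *m z) j 0 = 0 by apply: zjK; rewrite setU11.
  rewrite zE mulmxZrE => /eqP; rewrite mulf_eq0 (lt_eqF dj) orbF => /eqP la0.
  by rewrite la0 scale0r.
have [LjK phijK] := partial_basis_lex_feasible (partial_basis_pivot B Kd0 (conj dj jmin)) full.
exists j, (ratio A b Y d j 0 ord0); split=> //.
  by apply: Amask_ker_notin Kd0 _; rewrite lt_eqF.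
exact: lex_nneg_head (ratio_nneg Yfeas dj).
Qed.

Lemma vert_adj_lex_edge v w : polytope A b -> vert_adj A b v w ->
  exists I I', lex_edge A b I I' /\ phi A b I = v /\ phi A b I' = w.
Proof.
move=> Pbd [_ [_ [/eqP vw [_ [c vw_face]]]]].
have [[vP _] [wP _]] := edge_face_endpoints vw_face.
set u := w - v; set y0 := v + 2^-1 *: u.
have y0P : inP A b y0.
  by move=> i; rewrite mulmxDrE mulmxZrE mulmxBrE; have := vP i; have := wP i; lra.
have [Y [K [B Kactive]]] := purify y0P.
have Kline z : Amask A K *m z = 0 -> exists la, z = la *: u.
  by move/Kactive/(edge_face_directions vw_face).
have uK : Amask A K *m u = 0.
  apply/Amask_ker => k kK; have [_ Ycol /tight_active YK _] := B.
  move: (YK k kK); rewrite Ycol mulmxDrE mulmxZrE mulmxBrE.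
  by have := vP k; have := wP k; lra.
have u_neq0 : u != 0 by rewrite subr_eq0 eq_sym.
have [j1 [s1 [j1K s1_ge0 uj1 L1 phi1]]] := line_pivot Pbd B uK u_neq0 Kline.
have [|||j2 [s2 [j2K s2_ge0 uj2 L2 phi2]]] := line_pivot (d := - u) Pbd B.
- by rewrite mulmxN uK oppr0.
- by rewrite oppr_eq0.
- by move=> z /Kline[la ->]; exists (- la); rewrite scaleNr scalerN opprK.
have phi1w : phi A b (j1 |: K) = w.
  have := lex_feasible_vertex L1; rewrite phi1 -addrA -scalerDl.
  case/(edge_face_vertex vw_face vw) => [s1E|->]; first by exfalso; clear -s1_ge0 s1E; lra.
  by rewrite scale1r addrC subrK.
have phi2v : phi A b (j2 |: K) = v.
  have := lex_feasible_vertex L2; rewrite phi2 scalerN -addrA -scalerBl.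
  case/(edge_face_vertex vw_face vw) => [->|s2E]; last by exfalso; clear -s2_ge0 s2E; lra.
  by rewrite scale0r addr0.
exists (j2 |: K), (j1 |: K); do !split=> //.
have j21 : j2 != j1.
  by apply: contraTneq uj2 => ->; rewrite mulmxNrE oppr_lt0 -leNgt ltW.
by rewrite setU1I //; have := L1.1; rewrite cardsU1 j1K add1n => <-.
Qed.

End Polytope.

Theorem theorem3p8 (R : realFieldType) (m n : nat)
    (A : 'M[R]_(m, n)) (b : 'cV[R]_m) :
  polytope A b ->
  (forall v : 'cV[R]_n,
     is_vertex A b v <-> exists I : {set 'I_m}, lex_feasible A b I /\ phi A b I = v) /\
  (forall v w : 'cV[R]_n,
     vert_adj A b v w <->
     exists I I' : {set 'I_m},
       lex_edge A b I I' /\ phi A b I = v /\ phi A b I' = w /\ v <> w).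
Proof.
move=> Pbd; split=> [v|v w]; split.
- exact: vertex_lex_feasible.
- by move=> [I [LI <-]]; apply: lex_feasible_vertex.
- move=> vw; have [I [I' [LII' [Iv I'w]]]] := vert_adj_lex_edge Pbd vw.
  by exists I, I'; have [_ [_ [vw' _]]] := vw.
- by move=> [I [I' [LII' [<- [<- /eqP vw]]]]]; apply: lex_edge_vert_adj.
Qed.
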